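(* Let $R$ be a principal ideal domain. Then every prime ideal of $R[X]$ is power stable.
   Context: An ideal $I$ of the polynomial ring $R[X]$ over an integral domain $R$ is called power stable if $I^t\cap R = (I\cap R)^t$ for all integers $t\geq 1$. *)

From HB Require Import structures.
From mathcomp Require Import all_boot all_order all_algebra.
Set Implicit Arguments. Unset Strict Implicit. Unset Printing Implicit Defensive.
Import GRing.Theory.
Local Open Scope ring_scope.

Definition is_ideal (T : comNzRingType) (I : T -> Prop) : Prop :=
  I 0 /\ (forall x y, I x -> I y -> I (x + y)) /\ (forall a x, I x -> I (a * x)).

Definition is_prime_ideal (T : comNzRingType) (I : T -> Prop) : Prop :=
  is_ideal I /\ ~ I 1 /\ (forall x y, I (x * y) -> I x \/ I y).

Definition is_principal (T : comNzRingType) (I : T -> Prop) : Prop :=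
  exists a : T, forall x, I x <-> exists r : T, x = r * a.

Definition is_PID (R : idomainType) : Prop :=
  forall I : R -> Prop, is_ideal I -> is_principal I.

Definition ideal_mul (T : comNzRingType) (I J : T -> Prop) : T -> Prop :=
  fun x => exists s : seq (T * T),
    (forall p, p \in s -> I p.1 /\ J p.2) /\ x = \sum_(p <- s) p.1 * p.2.

Fixpoint ideal_pow (T : comNzRingType) (I : T -> Prop) (t : nat) : T -> Prop :=
  match t with
  | O => fun _ => True
  | S t' => ideal_mul (ideal_pow I t') I
  end.

Definition contract (R : comNzRingType) (I : {poly R} -> Prop) : R -> Prop :=
  fun r => I (r%:P).

Definition power_stable (R : idomainType) (I : {poly R} -> Prop) : Prop :=
  forall t : nat, (1 <= t)%N ->
    forall r : R, contract (ideal_pow I t) r <-> ideal_pow (contract I) t r.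

From mathcomp Require Import all_boot all_order all_algebra.
From Stdlib Require Import Classical.
Set Implicit Arguments. Unset Strict Implicit. Unset Printing Implicit Defensive.
Import GRing.Theory.
Local Open Scope ring_scope.

(* Let R be a PID and I a prime ideal of R[X], with I ∩ R = (a).  The
   inclusion (I ∩ R)^t ⊆ I^t ∩ R is clear since a ∈ I.  For the converse we
   show that a^t divides every constant r ∈ I^t.  If a = 0 this is immediate
   (r ∈ I ∩ R = 0).  Otherwise (a) is a nonzero prime, hence maximal, ideal of
   the PID R, so every l ∉ (a) satisfies 1 ∈ (a, l).  Using this Bezout
   relation to normalise leading coefficients, we find a monic f of degree ≥ 1
   such that the remainder modulo f sends I into a·R[X] (take f = X if
   I ⊆ a·R[X], otherwise a monic element of I of minimal degree).  Reduction
   modulo f is additive, compatible with products and R-linear, so it sends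
   I^t into a^t·R[X]; a constant is its own remainder, hence a^t | r. *)

Definition multiple (T : comNzRingType) (a x : T) : Prop := exists m, x = m * a.

Lemma ideal_mul_subr (T : comNzRingType) (J P : T -> Prop) :
  is_ideal P -> forall x, ideal_mul J P x -> P x.
Proof.
move=> [P0 [P_add P_mul]] x [s [Hs ->]].
elim: s Hs => [|q s IH] Hs; first by rewrite big_nil.
rewrite big_cons; apply: P_add.
  by apply: P_mul; case: (Hs q); rewrite ?inE ?eqxx.
by apply: IH => z zs; apply: Hs; rewrite inE zs orbT.
Qed.

Lemma ideal_pow_sub (T : comNzRingType) (J : T -> Prop) (t : nat) :
  is_ideal J -> (1 <= t)%N -> forall x, ideal_pow J t x -> J x.
Proof. by case: t => // t hJ _ x; apply: ideal_mul_subr. Qed.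

Lemma ideal_pow_mul_expr (T : comNzRingType) (J : T -> Prop) (a s : T) (t : nat) :
  J a -> ideal_pow J t (s * a ^+ t).
Proof.
move=> Ja; elim: t s => [//|t IH] s /=.
exists [:: (s * a ^+ t, a)]; split; first by move=> q; rewrite inE => /eqP -> /=.
by rewrite big_seq1 /= exprSr mulrA.
Qed.

(* We use it with rho = id and with rho = remainder modulo a monic. *)
Lemma ideal_pow_reduce (T : comNzRingType) (J : T -> Prop) (rho : T -> T) (a : T) :
  rho 0 = 0 -> {morph rho : x y / x + y} ->
  (forall x y, rho (x * y) = rho (rho x * rho y)) ->
  (forall (n : nat) k, rho (a ^+ n * k) = a ^+ n * rho k) ->
  (forall x, J x -> multiple a (rho x)) ->
  forall t x, ideal_pow J t x -> multiple (a ^+ t) (rho x).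
Proof.
move=> rho0 rhoD rhoM rhoX rhoJ; elim=> [|t IH] x /=.
  by move=> _; exists (rho x); rewrite mulr1.
move=> [s [Hs ->]]; elim: s Hs => [|q s IHs] Hs.
  by exists 0; rewrite big_nil rho0 mul0r.
rewrite big_cons rhoD.
have [m' ->] : multiple (a ^+ t.+1) (rho (\sum_(p <- s) p.1 * p.2)).
  by apply: IHs => z zs; apply: Hs; rewrite inE zs orbT.
have [Jq1 Jq2] := Hs q (mem_head _ _).
have [m1 e1] := IH _ Jq1; have [m2 e2] := rhoJ _ Jq2.
have -> : rho (q.1 * q.2) = a ^+ t.+1 * rho (m1 * m2).
  by rewrite rhoM e1 e2 -rhoX exprSr; congr rho; rewrite mulrACA mulrC.
by exists (rho (m1 * m2) + m'); rewrite mulrDl mulrC.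
Qed.

Lemma contract_ideal (R : comNzRingType) (I : {poly R} -> Prop) :
  is_ideal I -> is_ideal (contract I).
Proof.
move=> [I0 [ID IM]]; rewrite /contract; split; first by rewrite polyC0.
by split=> [x y|c x]; rewrite ?polyCD ?polyCM; [exact: ID | exact: IM].
Qed.

Lemma pid_prime_bezout (R : idomainType) (a l : R) : is_PID R -> a != 0 ->
  (forall x y, multiple a (x * y) -> multiple a x \/ multiple a y) ->
  ~ multiple a l -> exists x y, 1 = a * x + l * y.
Proof.
move=> hR a_neq0 a_prime a_ndvd_l.
pose J := fun z : R => exists x y, z = a * x + l * y.
have J_ideal : is_ideal J.
  split; first by exists 0, 0; rewrite !mulr0 addr0.
  split=> [x y [x1 [y1 ->]] [x2 [y2 ->]]|c x [x1 [y1 ->]]].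
    by exists (x1 + x2), (y1 + y2); rewrite !mulrDr addrACA.
  by exists (c * x1), (c * y1); rewrite mulrDr (mulrCA c a) (mulrCA c l).
have [d hd] := hR J J_ideal.
have [u a_ud] : exists u, a = u * d by apply/hd; exists 1, 0; rewrite mulr0 mulr1 addr0.
have [v l_vd] : exists v, l = v * d by apply/hd; exists 0, 1; rewrite mulr0 mulr1 add0r.
have [x0 [y0 d_comb]] : J d by apply/hd; exists 1; rewrite mul1r.
have [[w u_wa]|[w d_wa]] : multiple a u \/ multiple a d.
  by apply: a_prime; exists 1; rewrite mul1r -a_ud.
- have wd1 : w * d = 1.
    by apply: (mulfI a_neq0); rewrite mulr1 {2}a_ud u_wa mulrA (mulrC a w).
  exists (w * x0), (w * y0).
  by rewrite -wd1 d_comb mulrDr (mulrCA w a) (mulrCA w l).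
- by case: a_ndvd_l; exists (v * w); rewrite l_vd d_wa mulrA.
Qed.

Lemma size_sub_lead (R : nzRingType) (p : {poly R}) : p != 0 ->
  (size (p - lead_coef p *: 'X^((size p).-1))%R < size p)%N.
Proof.
move=> p_neq0; rewrite [in ltnRHS](polySpred p_neq0) ltnS.
apply/leq_sizeP => j; rewrite leq_eqVlt => /orP[/eqP <-|lt_dj].
  by rewrite coefB coefZ coefXn eqxx mulr1 subrr.
rewrite coefB coefZ coefXn gtn_eqF // mulr0 subr0 nth_default //.
by rewrite (polySpred p_neq0).
Qed.

Lemma monic_lead_combination (R : comNzRingType) (p : {poly R}) (u v : R) :
  p != 0 -> u + v * lead_coef p = 1 ->
  let q := v *: p + u *: 'X^((size p).-1) in q \is monic /\ size q = size p.
Proof.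
move=> p_neq0 uv1 q; set d := (size p).-1.
have sp : size p = d.+1 by rewrite /d (polySpred p_neq0).
have qd : q`_d = 1 by rewrite coefD !coefZ coefXn eqxx mulr1 addrC -uv1.
have sq : size q = d.+1.
  apply/eqP; rewrite eqn_leq; apply/andP; split.
    apply/leq_sizeP => j lt_dj; rewrite coefD !coefZ coefXn gtn_eqF //.
    by rewrite mulr0 addr0 nth_default ?mulr0 // sp.
  rewrite ltnNge; apply/negP => /leq_sizeP/(_ d (leqnn d)).
  by rewrite qd => /eqP; rewrite oner_eq0.
by rewrite monicE /lead_coef sq qd sp.
Qed.

Local Notation rmodp := Pdiv.Ring.rmodp.

(* Throughout this section I is an ideal of R[X] containing a, where a
   generates a maximal ideal of R (expressed by the Bezout hypothesis). *)
Section MonicReducer.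
Variables (R : idomainType) (I : {poly R} -> Prop) (a : R).
Hypothesis I_add : forall x y, I x -> I y -> I (x + y).
Hypothesis I_mul : forall c x, I x -> I (c * x).
Hypothesis I_a : I a%:P.
Hypothesis a_bezout : forall l, ~ multiple a l -> exists x y, 1 = a * x + l * y.

Lemma ideal_sub x y : I x -> I y -> I (x - y).
Proof. by move=> Ix Iy; apply: I_add => //; rewrite -mulN1r; apply: I_mul. Qed.

Lemma scale_multipleE (m : R) (k : {poly R}) : (m * a) *: k = (m *: k) * a%:P.
Proof. by rewrite [RHS]mulrC mul_polyC scalerA mulrC. Qed.

(* An element r ∈ I outside a·R[X] yields a monic element of I of size at most
   size r: strip leading terms divisible by a (which stay in I), and once the
   leading coefficient l is prime to a, combine r with a·X^deg r. *)
Lemma monic_in_ideal (r : {poly R}) : I r -> ~ multiple a%:P r ->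
  exists f, [/\ f \is monic, I f & (size f <= size r)%N].
Proof.
have [n] := ubnP (size r); elim: n r => // n IH r; rewrite ltnS => size_r Ir r_ndvd.
have r_neq0 : r != 0 by apply: contra_notN r_ndvd => /eqP ->; exists 0; rewrite mul0r.
set d := (size r).-1; set l := lead_coef r.
have [[m l_ma]|l_ndvd] := classic (multiple a l).
  set r' := r - l *: 'X^d.
  have Ir' : I r' by apply: ideal_sub => //; rewrite l_ma scale_multipleE; apply: I_mul.
  have size_r' : (size r' < size r)%N by apply: size_sub_lead.
  have r'_ndvd : ~ multiple a%:P r'.
    move=> [h r'_ha]; apply: r_ndvd; exists (h + m *: 'X^d).
    by rewrite mulrDl -r'_ha -scale_multipleE -l_ma subrK.
  have [f [f_monic If size_f]] := IH r' (leq_trans size_r' size_r) Ir' r'_ndvd.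
  by exists f; split=> //; rewrite (leq_trans size_f) // ltnW.
have [x [y one_comb]] := a_bezout l_ndvd.
have uv1 : a * x + y * l = 1 by rewrite one_comb (mulrC y).
have [f_monic size_f] := monic_lead_combination r_neq0 uv1.
exists (y *: r + (a * x) *: 'X^d); split=> //; last by rewrite size_f.
apply: I_add; first by rewrite -mul_polyC; apply: I_mul.
by rewrite mulrC scale_multipleE; apply: I_mul.
Qed.

(* Starting from a monic element of I, descend in degree until reduction modulo
   the monic polynomial sends I into a·R[X]: a remainder outside a·R[X] lies
   in I and produces a monic element of I of smaller degree. *)
Lemma monic_reducer (f : {poly R}) : f \is monic -> I f ->
  exists f', [/\ f' \is monic, I f' & forall g, I g -> multiple a%:P (rmodp g f')].
Proof.
have [n] := ubnP (size f); elim: n f => [|n IH] f //=; rewrite ltnS => size_f f_monic If.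
have [reduces|not_reduces] := classic (forall g, I g -> multiple a%:P (rmodp g f)).
  by exists f.
have [g g_bad] := not_all_ex_not _ _ not_reduces.
have [Ig g_ndvd] := imply_to_and _ _ g_bad.
have Irg : I (rmodp g f).
  have -> : rmodp g f = g - Pdiv.Ring.rdivp g f * f.
    by rewrite {2}(Pdiv.RingMonic.rdivp_eq f_monic g) addrC addKr.
  by apply: ideal_sub => //; apply: I_mul.
have size_rg : (size (rmodp g f) < size f)%N.
  by apply: Pdiv.Ring.ltn_rmodpN0; apply: monic_neq0.
have [f2 [f2_monic If2 size_f2]] := monic_in_ideal Irg g_ndvd.
exact: IH (leq_ltn_trans size_f2 (leq_trans size_rg size_f)) f2_monic If2.
Qed.

(* If I is proper, some monic f of degree ≥ 1 sends I into a·R[X] under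
   reduction modulo f; when I ⊆ a·R[X] already, f = X works. *)
Lemma reducer_exists : ~ I 1 ->
  exists f, [/\ f \is monic, (1 < size f)%N &
                forall g, I g -> multiple a%:P (rmodp g f)].
Proof.
move=> I_n1.
have [all_dvd|not_all_dvd] := classic (forall g, I g -> multiple a%:P g).
  exists 'X; split; [exact: monicX | by rewrite size_polyX |].
  move=> g /all_dvd[m ->]; exists (rmodp m 'X).
  by rewrite mulrC mul_polyC Pdiv.RingMonic.rmodpZ ?monicX // -mul_polyC mulrC.
have [g g_bad] := not_all_ex_not _ _ not_all_dvd.
have [Ig g_ndvd] := imply_to_and _ _ g_bad.
have [f [f_monic If _]] := monic_in_ideal Ig g_ndvd.
have [f' [f'_monic If' reduces]] := monic_reducer f_monic If.
exists f'; split=> //; rewrite ltnNge; apply: contra_notN I_n1 => size_f'.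
move: f'_monic If'; rewrite (size1_polyC size_f') monicE lead_coefC.
by move=> /eqP ->.
Qed.

End MonicReducer.

(* A constant is its own remainder modulo f of degree ≥ 1, so divisibility of
   the remainder by c descends to R. *)
Lemma reduced_constant_multiple (R : comNzRingType) (f : {poly R}) (c r : R) :
  (1 < size f)%N -> multiple c%:P (rmodp r%:P f) -> multiple c r.
Proof.
move=> size_f; rewrite Pdiv.Ring.rmodp_small; last first.
  exact: leq_ltn_trans (size_polyC_leq1 r) size_f.
move=> [m /(congr1 (fun q : {poly R} => q`_0))]; rewrite coefC coefMC /= => ->.
by exists m`_0.
Qed.

Lemma contract_pow_multiple (R : comNzRingType) (I : {poly R} -> Prop) (a : R)
    (f : {poly R}) : f \is monic -> (1 < size f)%N ->
  (forall g, I g -> multiple a%:P (rmodp g f)) ->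
  forall t r, ideal_pow I t r%:P -> multiple (a ^+ t) r.
Proof.
move=> f_monic size_f reduces t r Ir; apply: (reduced_constant_multiple size_f).
rewrite rmorphXn.
apply: (@ideal_pow_reduce _ I (fun q => rmodp q f) a%:P _ _ _ _ reduces t _ Ir).
- exact: Pdiv.Ring.rmod0p.
- exact: Pdiv.RingMonic.rmodpD.
- by move=> x y; rewrite Pdiv.RingMonic.rmodp_mulml // Pdiv.RingMonic.rmodp_mulmr.
- by move=> n k; rewrite -rmorphXn !mul_polyC Pdiv.RingMonic.rmodpZ.
Qed.

Lemma prime_contract_pow_multiple (R : idomainType) (I : {poly R} -> Prop) (a : R) :
  is_PID R -> is_prime_ideal I -> (forall x, contract I x <-> multiple a x) ->
  forall (t : nat) r, (1 <= t)%N -> ideal_pow I t r%:P -> multiple (a ^+ t) r.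
Proof.
move=> hR [I_ideal [I_n1 I_prime]] contract_a t r t_gt0 Ir.
have [_ [I_add I_mul]] := I_ideal.
have [a0 | a_neq0] := eqVneq a 0.
  have [m] := (contract_a r).1 (ideal_pow_sub I_ideal t_gt0 Ir).
  by rewrite a0 mulr0 => ->; exists 0; rewrite mul0r.
have a_prime x y : multiple a (x * y) -> multiple a x \/ multiple a y.
  by move=> /contract_a; rewrite /contract polyCM => /I_prime[] /contract_a; [left|right].
have a_bezout l : ~ multiple a l -> exists x y, 1 = a * x + l * y.
  exact: pid_prime_bezout.
have I_a : I a%:P by apply/contract_a; exists 1; rewrite mul1r.
have [f [f_monic size_f reduces]] := reducer_exists I_add I_mul I_a a_bezout I_n1.
exact: contract_pow_multiple f_monic size_f reduces t r Ir.
Qed.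

Theorem corollary3p4 (R : idomainType) (hR : is_PID R)
  (I : {poly R} -> Prop) (hI : is_prime_ideal I) : power_stable I.
Proof.
have [I_ideal _] := hI.
have [a contract_a] := hR _ (contract_ideal I_ideal).
have I_a : I a%:P by apply/contract_a; exists 1; rewrite mul1r.
move=> t t_gt0 r; split=> [Ir | Jr].
- have [s ->] := prime_contract_pow_multiple hR hI contract_a t_gt0 Ir.
  by apply: ideal_pow_mul_expr; exact: I_a.
- have [s ->] : multiple (a ^+ t) r.
    exact: (ideal_pow_reduce (rho := id)) (fun x => (contract_a x).1) _ _ Jr.
  by rewrite /contract polyCM rmorphXn; apply: ideal_pow_mul_expr.
Qed.
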